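(* Let $U \in \mathbb{U}_N$ satisfy $|\mathrm{tr}(UU^T)| \ge N(1-\delta)$ for some $\delta\ge 0$. Then $D(U,\mathbb{O}_N) \le \sqrt{\delta}$.
   Context: $\mathbb{U}_N$ is the group of complex $N\times N$ unitary matrices, $U^T$ is the transpose, and $\mathbb{O}_N=\{U\in\mathbb{U}_N: UU^T=U^TU=I\}$ is the orthogonal group (real orthogonal matrices). $\|A\|=\sqrt{\mathrm{tr}(A^\dagger A)}$ is the Frobenius norm. For matrices $A,B$, $D(A,B)=\min_{\theta\in[0,2\pi)}\frac{1}{\sqrt{2N}}\|e^{i\theta}A-B\|$, and for a set $\mathcal{S}$, $D(A,\mathcal{S})=\inf_{B\in\mathcal{S}}D(A,B)$. *)

(* Complex numbers are modelled by an arbitrary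
   numClosedFieldType C (e.g. algC); conjugation is Num.conj (z^* ). *)
From HB Require Import structures.
From mathcomp Require Import all_boot all_order all_algebra.
Set Implicit Arguments. Unset Strict Implicit. Unset Printing Implicit Defensive.
Import Order.TTheory GRing.Theory Num.Theory.
Local Open Scope ring_scope.

Definition adjmx (C : numClosedFieldType) (N : nat) (A : 'M[C]_N) : 'M[C]_N :=
  (map_mx Num.conj A)^T.

Definition unitary (C : numClosedFieldType) (N : nat) (U : 'M[C]_N) : Prop :=
  U *m adjmx U = 1%:M /\ adjmx U *m U = 1%:M.

Definition orthogonal (C : numClosedFieldType) (N : nat) (U : 'M[C]_N) : Prop :=
  unitary U /\ U *m U^T = 1%:M /\ U^T *m U = 1%:M.

Definition frob (C : numClosedFieldType) (N : nat) (A : 'M[C]_N) : C :=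
  sqrtC (\tr (adjmx A *m A)).

Definition dphase (C : numClosedFieldType) (N : nat) (z : C) (A B : 'M[C]_N) : C :=
  frob (z *: A - B) / sqrtC (2 * N%:R).

(* D(A, O_N) <= r, where D(A,O_N) = inf_{B in O_N} min_{theta} dphase (e^{i theta}) A B:
   the infimum (over B and theta) is <= r iff every r + eps is exceeded by some value. *)
Definition dist_orth_le (C : numClosedFieldType) (N : nat) (A : 'M[C]_N) (r : C) : Prop :=
  forall eps : C, 0 < eps ->
    exists z : C, `|z| = 1 /\
      exists B : 'M[C]_N, orthogonal B /\ dphase z A B <= r + eps.

(* The matrix W := U U^T is unitary and symmetric, hence normal: W = P^* diag(d) P
   with P unitary and |d_i| = 1.  Applying a scalar function f to the eigenvalues
   gives the spectral calculus  mxfun f W := P^* diag(f d) P, and every mxfun f W is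
   again symmetric, because P P^T commutes with diag(d), hence with diag(f d).
   Let w be the phase of tr W and h x the square root of w^* x with nonnegative
   real part.  Then S := mxfun (sqrt w * h) W is a symmetric unitary square root
   of W, so V := S^* U is orthogonal, and the distance from (sqrt w)^* U to V is
   the Frobenius norm of mxfun (h - 1) W, whose square is
     sum_i |h d_i - 1|^2 <= sum_i (1 - Re (w^* d_i)) = N - |tr W| <= N delta. *)
Set Warnings "-notation-overridden -ambiguous-paths".
From HB Require Import structures.
From mathcomp Require Import all_boot all_order all_algebra.
From mathcomp Require Import ring spectral.
Import Order.TTheory GRing.Theory Num.Theory.
Set Implicit Arguments. Unset Strict Implicit.
Local Open Scope ring_scope.

Section PhaseScalars.
Variable C : numClosedFieldType.
Implicit Types x y u T : C.

Lemma unit_mulC x : `|x| = 1 -> x * x^* = 1.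
Proof. by move=> x1; rewrite -normCK x1 expr1n. Qed.

(* The square root of u lying in the closed right half-plane; sqrtC itself is
   normalised by its imaginary part instead. *)
Definition sqrt_rhp u : C := if 0 <= 'Re (sqrtC u) then sqrtC u else - sqrtC u.

Lemma sqrt_rhpK u : sqrt_rhp u ^+ 2 = u.
Proof. by rewrite /sqrt_rhp; case: ifP; rewrite ?sqrrN sqrtCK. Qed.

Lemma Re_sqrt_rhp_ge0 u : 0 <= 'Re (sqrt_rhp u).
Proof.
rewrite /sqrt_rhp; case: ifP => // Re_lt0.
by rewrite raddfN /= oppr_ge0 ltW // real_ltNge ?Re_lt0.
Qed.

Lemma norm_sqrtC_unit u : `|u| = 1 -> `|sqrtC u| = 1.
Proof. by move=> u1; rewrite -(sqrCK (normr_ge0 _)) -normrX sqrtCK u1 sqrtC1. Qed.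

Lemma norm_sqrt_rhp u : `|u| = 1 -> `|sqrt_rhp u| = 1.
Proof.
move=> u1; have : `|sqrt_rhp u| ^+ 2 = 1 by rewrite -normrX sqrt_rhpK.
by move/eqP; rewrite sqrp_eq1 // => /eqP.
Qed.

(* For y on the unit circle with Re y >= 0:  |y - 1|^2 = 2 - 2 Re y is bounded by
   1 - Re (y^2) = 2 - 2 (Re y)^2. *)
Lemma unit_dist1_le y : `|y| = 1 -> 0 <= 'Re y ->
  `|y - 1| ^+ 2 <= 1 - 'Re (y ^+ 2).
Proof.
move=> y1 Re_ge0.
have Re_le1 : 'Re y <= 1.
  by rewrite -y1; exact: leif_Re_Creal.
rewrite -subr_ge0 normCK !ReE.
have -> : 1 - (y ^+ 2 + (y ^+ 2)^*) / 2%:R - (y - 1) * (y - 1)^* =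
  2%:R * 'Re y * (1 - 'Re y).
  by rewrite ReE rmorphB rmorph1 rmorphXn /=; field.
by rewrite !mulr_ge0 ?subr_ge0.
Qed.

Definition phase T : C := if T == 0 then 1 else T / `|T|.

Lemma norm_phase T : `|phase T| = 1.
Proof.
rewrite /phase; case: eqP => [_|/eqP T0]; first exact: normr1.
by rewrite normf_div normr_id divff // normr_eq0.
Qed.

Lemma phase_conjM T : (phase T)^* * T = `|T|.
Proof.
rewrite /phase; case: eqP => [->|/eqP T0]; first by rewrite normr0 mulr0.
rewrite fmorph_div /= conj_normC mulrAC -normCKC expr2 mulfK //.
by rewrite normr_eq0.
Qed.

Lemma sum_unit_dist1_le n (d : 'I_n -> C) : (forall i, `|d i| = 1) ->
  \sum_i `|sqrt_rhp ((phase (\sum_i d i))^* * d i) - 1| ^+ 2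
    <= n%:R - `|\sum_i d i|.
Proof.
move=> d1; set w := phase _.
have wd1 i : `|w^* * d i| = 1 by rewrite normrM norm_conjC norm_phase d1 mulr1.
apply: (@le_trans _ _ (\sum_i (1 - 'Re (w^* * d i)))).
  apply: ler_sum => i _; rewrite -{2}[w^* * d i]sqrt_rhpK.
  exact/unit_dist1_le/Re_sqrt_rhp_ge0/norm_sqrt_rhp.
rewrite sumrB sumr_const card_ord -raddf_sum -mulr_sumr phase_conjM.
by rewrite /= (Creal_ReP _ (normr_real _)).
Qed.

Lemma normalized_sqrt_le (t dl : C) N : 0 <= t -> t <= N%:R * dl -> 0 <= dl ->
  sqrtC t / sqrtC (2 * N%:R) <= sqrtC dl.
Proof.
move=> t_ge0 t_le dl_ge0; case: N t_le => [|N] t_le.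
  by rewrite mulr0 sqrtC0 invr0 mulr0 sqrtC_ge0.
have N_gt0 : 0 < 2 * N.+1%:R :> C by rewrite mulr_gt0 ?ltr0n.
rewrite ler_pdivrMr ?sqrtC_gt0 // -sqrtCM ?nnegrE //; last exact: ltW.
rewrite ler_sqrtC ?nnegrE // ?mulr_ge0 //.
apply: (le_trans t_le); rewrite mulrC ler_wpM2l // ler_pMl ?ltr0n //.
by rewrite ler1n.
Qed.
End PhaseScalars.

Local Open Scope sesquilinear_scope.

(* A matrix commuting with diag(d) only links indices carrying equal entries of d,
   so it also commutes with diag(f d) for every f. *)
Lemma diag_mx_comm_map (R : idomainType) n (d : 'rV[R]_n) (f : R -> R)
    (M : 'M[R]_n) :
  M *m diag_mx d = diag_mx d *m M ->
  M *m diag_mx (map_mx f d) = diag_mx (map_mx f d) *m M.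
Proof.
move=> /matrixP Md; apply/matrixP => i j; rewrite mul_mx_diag mul_diag_mx !mxE.
have [-> | Mij] := eqVneq (M i j) 0; first by rewrite mulr0 mul0r.
have dij : d 0 i = d 0 j.
  apply: (mulIf Mij); have := Md i j.
  by rewrite mul_mx_diag mul_diag_mx !mxE mulrC.
by rewrite dij mulrC.
Qed.

Section SpectralCalculus.
Variables (C : numClosedFieldType) (n : nat).
Implicit Types (W : 'M[C]_n) (f g : C -> C).

(* Spectral calculus: f applied to the eigenvalues of W in the unitary eigenbasis
   chosen by spectralmx (meaningful when W is normal). *)
Definition mxfun f W : 'M[C]_n :=
  (spectralmx W)^t* *m diag_mx (map_mx f (spectral_diag W)) *m spectralmx W.

Variable W : 'M[C]_n.
Local Notation P := (spectralmx W).
Local Notation d := (spectral_diag W).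

Let P_unitary : P \is unitarymx := spectral_unitarymx W.
Let PPt : P *m P^t* = 1%:M.
Proof. exact/unitarymxP. Qed.
Let PtP : P^t* *m P = 1%:M.
Proof. exact: mulmx1C PPt. Qed.

Lemma eq_mxfun f g : (forall i, f (d 0 i) = g (d 0 i)) -> mxfun f W = mxfun g W.
Proof.
move=> fg; rewrite /mxfun; congr (_ *m diag_mx _ *m _).
by apply/matrixP => i j; rewrite !mxE ord1 fg.
Qed.

Lemma mxfunK f : P *m mxfun f W *m P^t* = diag_mx (map_mx f d).
Proof. by rewrite /mxfun !mulmxA PPt mul1mx -mulmxA PPt mulmx1. Qed.

Lemma mxfun_eigen f g : mxfun f W = mxfun g W -> forall i, f (d 0 i) = g (d 0 i).
Proof.
move=> fg i; have /matrixP/(_ i i) := congr1 (fun M => P *m M *m P^t*) fg.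
by rewrite /= !mxfunK !mxE eqxx !mulr1n.
Qed.

Lemma mxfun_mul f g :
  mxfun f W *m mxfun g W = mxfun (fun x => f x * g x) W.
Proof.
rewrite /mxfun -!mulmxA [P *m (P^t* *m _)]mulmxA PPt mul1mx.
rewrite [diag_mx _ *m (diag_mx _ *m _)]mulmxA mulmx_diag.
congr (_ *m (_ *m _)); apply: congr1.
by apply/matrixP => i j; rewrite ord1 !mxE.
Qed.

Lemma mxfun_adj f : (mxfun f W)^t* = mxfun (fun x => (f x)^*) W.
Proof.
rewrite /mxfun !trmx_mul !map_mxM trmxCK mulmxA tr_diag_mx map_diag_mx.
by congr (_ *m diag_mx _ *m _); apply/matrixP => i j; rewrite ord1 !mxE.
Qed.

Lemma mxfun_affine a b f :
  mxfun (fun x => a * f x + b) W = a *: mxfun f W + b%:M.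
Proof.
rewrite /mxfun.
have -> : map_mx (fun x => a * f x + b) d = a *: map_mx f d + const_mx b.
  by apply/matrixP => i j; rewrite !mxE.
rewrite raddfD /= diag_const_mx linearZ /= mulmxDr mulmxDl.
by rewrite -scalemxAr -scalemxAl mul_mx_scalar -scalemxAl PtP scalemx1.
Qed.

Lemma mxfun_trace f : \tr (mxfun f W) = \sum_i f (d 0 i).
Proof.
rewrite /mxfun mxtrace_mulC mulmxA PPt mul1mx mxtrace_diag.
by apply: eq_bigr => i _; rewrite mxE.
Qed.

Lemma mxfun_frob f :
  \tr ((mxfun f W)^t* *m mxfun f W) = \sum_i `|f (d 0 i)| ^+ 2.
Proof.
rewrite mxfun_adj mxfun_mul mxfun_trace.
by apply: eq_bigr => i _; rewrite normCKC.
Qed.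

Lemma mxfun_cst b : mxfun (fun=> b) W = b%:M.
Proof.
rewrite /mxfun (_ : map_mx _ d = const_mx b); last by apply/matrixP => i j; rewrite !mxE.
by rewrite diag_const_mx mul_mx_scalar -scalemxAl PtP scalemx1.
Qed.

Lemma mxfun_unitary f : (forall i, `|f (d 0 i)| = 1) -> mxfun f W \is unitarymx.
Proof.
move=> f1; apply/unitarymxP; rewrite mxfun_adj mxfun_mul -(mxfun_cst 1).
by apply: eq_mxfun => i; rewrite -normCK f1 expr1n.
Qed.

Let Pc := map_mx Num.conj P.
Let PcPt : Pc *m P^T = 1%:M.
Proof. by rewrite -[P^T]map_mxCK -map_mxM PPt map_mx1. Qed.

Let congrP X := P *m X *m P^T.
Let congrP_inj : injective congrP.
Proof.
apply: (can_inj (g := fun Y => P^t* *m Y *m Pc)) => X.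
by rewrite /congrP !mulmxA PtP mul1mx -mulmxA (mulmx1C PcPt) mulmx1.
Qed.

Lemma mxfun_symmetricE f :
  ((mxfun f W)^T == mxfun f W) =
  ((P *m P^T) *m diag_mx (map_mx f d) == diag_mx (map_mx f d) *m (P *m P^T)).
Proof.
rewrite -[LHS](inj_eq congrP_inj) /congrP /mxfun !trmx_mul tr_diag_mx.
rewrite map_trmx trmxK !mulmxA PPt mul1mx -!mulmxA PcPt mulmx1.
by rewrite !mulmxA.
Qed.

Hypothesis W_normal : W \is normalmx.

Lemma mxfun_id : mxfun id W = W.
Proof.
rewrite [RHS](orthomx_spectralP W_normal) invmx_unitary // /mxfun.
by rewrite (map_mx_id (f := id)).
Qed.

Lemma mxfun_symmetric f : W^T = W -> (mxfun f W)^T = mxfun f W.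
Proof.
move=> WT; apply/eqP; rewrite mxfun_symmetricE; apply/eqP/diag_mx_comm_map.
have /eqP := congr1 (fun X => X^T) (mxfun_id); rewrite WT -{2}mxfun_id.
by rewrite mxfun_symmetricE (map_mx_id (f := id)) // => /eqP.
Qed.

Lemma unitary_spectral_norm : W \is unitarymx -> forall i, `|d 0 i| = 1.
Proof.
move=> W_unitary i.
have : mxfun id W *m (mxfun id W)^t* = 1%:M by rewrite mxfun_id; exact/unitarymxP.
rewrite mxfun_adj mxfun_mul -(mxfun_cst 1) => /mxfun_eigen/(_ i).
by rewrite -normCK => /eqP; rewrite sqrp_eq1 // => /eqP.
Qed.

End SpectralCalculus.

Section UnitaryFactor.
Variables (C : numClosedFieldType) (n : nat).
Implicit Types U S V W X : 'M[C]_n.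

Lemma adjmxE X : adjmx X = X^t*.
Proof. by rewrite /adjmx map_trmx. Qed.

Lemma orthogonalP V : V \is unitarymx -> V *m V^T = 1%:M -> orthogonal V.
Proof.
move=> /unitarymxP VVt VVT; have VtV := mulmx1C VVt.
by rewrite /orthogonal /unitary !adjmxE; split; [|split; last exact: mulmx1C].
Qed.

Lemma orthogonal_factor U S : U \is unitarymx -> S \is unitarymx ->
  S^T = S -> S *m S = U *m U^T -> orthogonal (S^t* *m U).
Proof.
move=> U_unitary S_unitary ST SS; apply: orthogonalP.
  by rewrite mul_unitarymx ?trmxC_unitary.
have StT : (S^t*)^T = S^t* by rewrite map_trmx trmxK ST.
have SSt : S *m S^t* = 1%:M by apply/unitarymxP.
rewrite trmx_mul StT mulmxA -[S^t* *m U *m U^T]mulmxA -SS.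
by rewrite mulmxA (mulmx1C SSt) mul1mx SSt.
Qed.

Lemma frob_mulmx_unitary X V : V \is unitarymx ->
  \tr ((X *m V)^t* *m (X *m V)) = \tr (X^t* *m X).
Proof.
move=> /unitarymxP VVt.
by rewrite trmx_mul map_mxM mulmxA mxtrace_mulC !mulmxA VVt mul1mx.
Qed.

Lemma orthogonal_factor_dist U S z : U \is unitarymx -> S \is unitarymx ->
  let X := z *: U - S^t* *m U in
  \tr (X^t* *m X) = \tr ((z *: S - 1%:M)^t* *m (z *: S - 1%:M)).
Proof.
move=> U_unitary /unitarymxP SSt X.
have -> : X = (z *: S - 1%:M) *m (S^t* *m U).
  by rewrite mulmxBl mul1mx -scalemxAl mulmxA SSt mul1mx.
by rewrite frob_mulmx_unitary // mul_unitarymx ?trmxC_unitary //; apply/unitarymxP.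
Qed.

Lemma unitary_normalmx W : W \is unitarymx -> W \is normalmx.
Proof. by move=> /unitarymxP WWt; apply/normalmxP; rewrite WWt (mulmx1C WWt). Qed.

End UnitaryFactor.

Section PhasedSquareRoot.
Variables (C : numClosedFieldType) (n : nat) (W : 'M[C]_n) (w : C).
Hypotheses (W_unitary : W \is unitarymx) (W_sym : W^T = W) (w_unit : `|w| = 1).

Let W_normal : W \is normalmx := unitary_normalmx W_unitary.
Definition phased_sqrtmx : 'M[C]_n :=
  mxfun (fun x => sqrtC w * sqrt_rhp (w^* * x)) W.

Lemma phased_sqrtmx_unitary : phased_sqrtmx \is unitarymx.
Proof.
apply: mxfun_unitary => i; rewrite normrM norm_sqrtC_unit // mul1r norm_sqrt_rhp //.
by rewrite normrM norm_conjC w_unit mul1r unitary_spectral_norm.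
Qed.

Lemma phased_sqrtmx_sym : phased_sqrtmx^T = phased_sqrtmx.
Proof. exact: mxfun_symmetric. Qed.

Lemma phased_sqrtmxK : phased_sqrtmx *m phased_sqrtmx = W.
Proof.
rewrite mxfun_mul -[RHS](mxfun_id W_normal); apply: eq_mxfun => i.
by rewrite mulrACA -!expr2 sqrtCK sqrt_rhpK mulrA unit_mulC ?mul1r.
Qed.

Lemma phased_sqrtmx_sub1 :
  (sqrtC w)^* *: phased_sqrtmx - 1%:M = mxfun (fun x => sqrt_rhp (w^* * x) - 1) W.
Proof.
rewrite (@eq_mxfun _ _ _ _
  (fun x => (sqrtC w)^* * (sqrtC w * sqrt_rhp (w^* * x)) + -1)).
  by rewrite mxfun_affine raddfN.
by move=> i; rewrite mulrA -normCKC norm_sqrtC_unit // expr1n mul1r.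
Qed.

End PhasedSquareRoot.

Theorem lemma2 (C : numClosedFieldType) (N : nat) (U : 'M[C]_N) (delta : C) :
  unitary U -> 0 <= delta ->
  N%:R * (1 - delta) <= `|\tr (U *m U^T)| ->
  dist_orth_le U (sqrtC delta).
Proof.
move=> [UUt _] delta_ge0 trace_ge eps eps_gt0.
have U_unitary : U \is unitarymx by apply/unitarymxP; rewrite -adjmxE.
set W := U *m U^T.
have W_unitary : W \is unitarymx by rewrite mul_unitarymx ?trmx_unitary.
have W_sym : W^T = W by rewrite trmx_mul trmxK.
have d_unit := unitary_spectral_norm (unitary_normalmx W_unitary) W_unitary.
have trW : \tr W = \sum_i spectral_diag W 0 i.
  by rewrite -{1}(mxfun_id (unitary_normalmx W_unitary)) mxfun_trace.
pose w := phase (\sum_i spectral_diag W 0 i); pose S := phased_sqrtmx W w.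
have w_unit : `|w| = 1 := norm_phase _.
have S_unitary : S \is unitarymx := phased_sqrtmx_unitary W_unitary w_unit.
exists (sqrtC w)^*; split; first by rewrite norm_conjC norm_sqrtC_unit.
exists (S^t* *m U); split.
  apply: orthogonal_factor U_unitary S_unitary _ _.
    exact: phased_sqrtmx_sym W_unitary W_sym.
  exact: phased_sqrtmxK W_unitary w_unit.
rewrite /dphase /frob adjmxE orthogonal_factor_dist // phased_sqrtmx_sub1 //.
rewrite mxfun_frob; apply: (@le_trans _ _ (sqrtC delta)); last by rewrite lerDl ltW.
apply: normalized_sqrt_le delta_ge0; first by apply: sumr_ge0 => i _; rewrite exprn_ge0.
apply: le_trans (sum_unit_dist1_le d_unit) _.
by rewrite lerBlDr -lerBlDl -trW (le_trans _ trace_ge) // mulrBr mulr1.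
Qed.
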